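(* Let $G_1=(V,D_1)$ and $G_2=(V,D_2)$ be directed graphs with the same Jacobian matroid. If a node $i$ is a sink node (has no children) in both graphs, then $\mathrm{pa}_{G_1}(i)=\mathrm{pa}_{G_2}(i)$.
   Context: A directed graph $G=(V,D)$ has edge set $D\subseteq V\times V$ of ordered pairs $(i,j)$, $i\neq j$. $\Lambda$ is the $V\times V$ matrix with indeterminate entries $\lambda_{ij}$ for $(i,j)\in D$ and zeros elsewhere, and $s$ is a further indeterminate. Let $\psi_G(\Lambda,s)=s(I-\Lambda)(I-\Lambda)^T=K$. The transposed Jacobian $J(\psi_G)$ has rows indexed by $\{\lambda_{kl}:(k,l)\in D\}\cup\{s\}$ and columns indexed by $K_{ij}$, $i\le j$, with entries $\partial K_{ij}/\partial\theta$. The Jacobian matroid of $G$ is the matroid on the column labels in which a set is independent iff its columns are linearly independent over $\mathbb{R}(\lambda,s)$. *)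

From HB Require Import structures.
From mathcomp Require Import all_boot all_order all_algebra.
From mathcomp Require Import fraction.
From mathcomp Require Import reals.
From mathcomp Require Import mpoly.
Set Implicit Arguments. Unset Strict Implicit. Unset Printing Implicit Defensive.
Import Order.TTheory GRing.Theory Num.Theory.
Local Open Scope ring_scope.

Definition loopless (n : nat) (D : {set 'I_n * 'I_n}) : Prop :=
  forall i : 'I_n, (i, i) \notin D.

(* Polynomial ring variables: nvars n = n*n + 1; variable (i*n + j) is
   lambda_ij, variable n*n is s.  Variables lambda_ij with (i,j) \notin D
   never occur. *)
Definition nvars (n : nat) : nat := (n * n).+1.
Definition lamvar (n : nat) (i j : 'I_n) : 'I_(nvars n) := inord (i * n + j).
Definition svar (n : nat) : 'I_(nvars n) := ord_max.

Section Jac.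
Variables (R : realType) (n : nat).
Local Notation P := {mpoly R[nvars n]}.
Local Notation F := {fraction P}.

Definition Lambda (D : {set 'I_n * 'I_n}) : 'M[P]_n :=
  \matrix_(i, j) (if (i, j) \in D then 'X_(lamvar i j) else 0).

Definition Kmat (D : {set 'I_n * 'I_n}) : 'M[P]_n :=
  'X_(svar n) *: ((1%:M - Lambda D) *m (1%:M - Lambda D)^T).

(* Column of the transposed Jacobian labelled K_ij: entries dK_ij/dtheta,
   theta ranging over the variables (seen in R(lambda, s)).  The rows for
   variables not among {lambda_kl : (k,l) in D} u {s} are identically zero. *)
Definition jac_col (D : {set 'I_n * 'I_n}) (p : 'I_n * 'I_n) : 'rV[F]_(nvars n) :=
  \row_(v < nvars n) tofrac ((Kmat D p.1 p.2)^`M(v)).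

Definition labels : {set 'I_n * 'I_n} := [set p : 'I_n * 'I_n | (nat_of_ord p.1 <= nat_of_ord p.2)%N].

Definition jac_indep (D : {set 'I_n * 'I_n}) (S : {set 'I_n * 'I_n}) : bool :=
  (S \subset labels) &&
  row_free (\matrix_(r < #|S|) jac_col D (enum_val r)).

Definition same_jacobian_matroid (D1 D2 : {set 'I_n * 'I_n}) : Prop :=
  forall S : {set 'I_n * 'I_n}, jac_indep D1 S = jac_indep D2 S.
End Jac.

Definition is_sink (n : nat) (D : {set 'I_n * 'I_n}) (i : 'I_n) : Prop :=
  forall j : 'I_n, (i, j) \notin D.

Definition parents (n : nat) (D : {set 'I_n * 'I_n}) (i : 'I_n) : {set 'I_n} :=
  [set j | (j, i) \in D].

(* If i is a sink of G, then row i of I - Lambda is the unit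
   vector e_i, so for j <> i the entry K_ij = -s lambda_ji is zero when
   (j, i) is not an edge and is a polynomial with nonzero s-derivative when it
   is.  Hence the singleton {K_ij} is independent in the Jacobian matroid
   exactly when j is a parent of i, and the matroid determines pa(i). *)
From HB Require Import structures.
From mathcomp Require Import all_boot all_order all_algebra.
From mathcomp Require Import fraction reals mpoly.
Set Implicit Arguments. Unset Strict Implicit. Unset Printing Implicit Defensive.
Import Order.TTheory GRing.Theory Num.Theory.
Local Open Scope ring_scope.

Section MPolyVariables.
Variables (R : nzRingType) (k : nat).

Lemma mpolyX_neq0 (l : 'I_k) : ('X_l : {mpoly R[k]}) != 0.
Proof.
apply/eqP => X0; have := mcoeffXU R l l.
by rewrite X0 mcoeff0 eqxx => /esym/eqP; rewrite oner_eq0.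
Qed.

Lemma mderivX1 (l m : 'I_k) : ('X_l : {mpoly R[k]})^`M(m) = (l == m)%:R.
Proof.
rewrite (@mderivX k R) mnm1E.
have [->|_] := eqVneq l m; last by rewrite scale0r.
have -> : (U_(m) - U_(m) = 0)%MM by apply/mnmP => t; rewrite mnmBE mnm0E subnn.
by rewrite scale1r mpolyX0.
Qed.

End MPolyVariables.

Lemma lamvar_neq_svar (n : nat) (j k : 'I_n) : lamvar j k != svar n.
Proof.
have lt_jk : (j * n + k < n * n)%N.
  apply: (@leq_trans (j * n + n)); first by rewrite ltn_add2l.
  by rewrite -mulSnr leq_mul2r ltn_ord orbT.
by rewrite -val_eqE /= inordK ?ltn_eqF // ltnS ltnW.
Qed.

Definition label_of (n : nat) (i j : 'I_n) : 'I_n * 'I_n :=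
  if (i <= j)%N then (i, j) else (j, i).

Lemma label_of_labels (n : nat) (i j : 'I_n) : label_of i j \in labels n.
Proof. by rewrite inE /label_of; case: (leqP i j) => [|/ltnW]. Qed.

Section SinkColumns.
Variables (R : realType) (n : nat) (D : {set 'I_n * 'I_n}).

Lemma Kmat_sym (a b : 'I_n) : Kmat R D a b = Kmat R D b a.
Proof.
rewrite /Kmat !mxE; congr (_ * _).
by apply: eq_bigr => l _; rewrite !mxE mulrC.
Qed.

Lemma jac_col_label_of (i j : 'I_n) :
  jac_col R D (label_of i j) = jac_col R D (i, j).
Proof.
rewrite /label_of; case: (leqP i j) => // _.
by apply/rowP => v; rewrite mxE [RHS]mxE /= Kmat_sym.
Qed.

Lemma jac_indep1 (p : 'I_n * 'I_n) :
  jac_indep R D [set p] = (p \in labels n) && (jac_col R D p != 0).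
Proof.
rewrite /jac_indep sub1set; congr (_ && _).
set A := \matrix_(r < _) _.
have rowsA r : row r A = jac_col R D p.
  by apply/rowP => v; rewrite !mxE; have := enum_valP r; rewrite inE => /eqP ->.
have pS : p \in [set p] by rewrite inE.
have rank_le1 : (\rank A <= 1)%N.
  by move: (rank_leq_row A); rewrite [X in (_ <= X)%N]cards1.
rewrite /row_free [X in _ == X]cards1 eqn_leq rank_le1 lt0n mxrank_eq0.
apply/idP/idP => [|nzp].
  by apply: contra => /eqP p0; apply/eqP/row_matrixP => r; rewrite rowsA row0 p0.
by apply: contra nzp => /eqP A0; rewrite -(rowsA (enum_rank_in pS p)) A0 row0.
Qed.

Lemma Kmat_sink (i j : 'I_n) : is_sink D i -> j != i ->
  Kmat R D i j = - ('X_(svar n) * Lambda R D j i).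
Proof.
move=> sink_i ji; rewrite /Kmat mxE -mulrN; congr (_ * _).
have row_i l : (1%:M - Lambda R D) i l = (i == l)%:R.
  by rewrite !mxE (negbTE (sink_i l)) subr0.
rewrite mxE (bigD1 i) //= big1 => [|l il]; last first.
  by rewrite row_i eq_sym (negbTE il) mul0r.
by rewrite row_i eqxx mul1r addr0 !mxE (negbTE ji) sub0r.
Qed.

Lemma jac_col_sink_eq0 (i j : 'I_n) : is_sink D i -> j != i ->
  (jac_col R D (i, j) == 0) = ((j, i) \notin D).
Proof.
move=> sink_i ji; have Kij := Kmat_sink sink_i ji.
case: (boolP ((j, i) \in D)) => ji_edge /=.
  apply/negbTE/eqP => /rowP/(_ (svar n)); rewrite mxE /= Kij !mxE ji_edge.
  rewrite mderivN mderivM !mderivX1 eqxx (negbTE (lamvar_neq_svar _ _)).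
  rewrite mulr0 addr0 mul1r => /eqP; rewrite tofrac_eq0 oppr_eq0.
  exact/negP/mpolyX_neq0.
apply/eqP/rowP => v; rewrite mxE /= Kij !mxE (negbTE ji_edge) mulr0 oppr0.
by rewrite mderiv0 tofrac0.
Qed.

Lemma jac_indep_sink (i j : 'I_n) : is_sink D i -> j != i ->
  jac_indep R D [set label_of i j] = ((j, i) \in D).
Proof.
move=> sink_i ji.
by rewrite jac_indep1 label_of_labels jac_col_label_of jac_col_sink_eq0 ?negbK.
Qed.

End SinkColumns.

Theorem lemma3p7 (R : realType) (n : nat) (D1 D2 : {set 'I_n * 'I_n}) (i : 'I_n) :
  loopless D1 -> loopless D2 ->
  same_jacobian_matroid R D1 D2 ->
  is_sink D1 i -> is_sink D2 i ->
  parents D1 i = parents D2 i.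
Proof.
move=> loop1 loop2 same_mat sink1 sink2; apply/setP => j; rewrite !inE.
have [->|ji] := eqVneq j i; first by rewrite (negbTE (loop1 i)) (negbTE (loop2 i)).
by rewrite -(jac_indep_sink R sink1 ji) -(jac_indep_sink R sink2 ji) same_mat.
Qed.
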